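(* For every graph $G$ on vertex set $[n]$, the graph $\langle G\rangle_{K_4}$ consists of a triangle-free collection of edge-disjoint cliques.
   Context: $\langle G\rangle_{K_4}$ is the closure of $G$ under the $K_4$-bootstrap process on $K_n$: repeatedly add any edge of $K_n$ which is the only missing edge of some copy of $K_4$. A collection $\mathcal{K}$ of cliques is triangle-free if there do not exist distinct vertices $u,v,w$ and cliques $A,B,C \in \mathcal{K}$ with $u \in V(A)\cap V(B)$, $v \in V(B) \cap V(C)$ and $w \in V(A) \cap V(C)$. *)

From mathcomp Require Import all_boot.
Set Implicit Arguments. Unset Strict Implicit. Unset Printing Implicit Defensive.

(* A graph on vertex set [n] = 'I_n is a symmetric irreflexive relation. *)

(* <G>_{K4}: the closure of G under the K4-bootstrap process on K_n. *)
Inductive K4_closure (n : nat) (G : rel 'I_n) : 'I_n -> 'I_n -> Prop :=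
| K4c_base u v : G u v -> K4_closure G u v
| K4c_step u v a b :
    u != v -> u != a -> u != b -> v != a -> v != b -> a != b ->
    K4_closure G u a -> K4_closure G u b ->
    K4_closure G v a -> K4_closure G v b ->
    K4_closure G a b ->
    K4_closure G u v.

Definition clique_triangle_free (n : nat) (K : {set {set 'I_n}}) : Prop :=
  ~ exists (u v w : 'I_n) (A B C : {set 'I_n}),
      [/\ [/\ u != v, v != w & u != w],
          [/\ A \in K, B \in K & C \in K],
          [/\ A != B, B != C & A != C] &
          [/\ u \in A :&: B, v \in B :&: C & w \in A :&: C]].

Definition edge_disjoint_cliques (n : nat) (K : {set {set 'I_n}}) : Prop :=
  (forall A, A \in K -> 2 <= #|A|) /\
  (forall A B, A \in K -> B \in K -> A != B -> #|A :&: B| <= 1).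

Definition graph_of_cliques (n : nat) (H : 'I_n -> 'I_n -> Prop)
    (K : {set {set 'I_n}}) : Prop :=
  forall u v : 'I_n, u != v ->
    (H u v <-> exists2 A, A \in K & (u \in A) && (v \in A)).

From mathcomp Require Import all_boot.
From Stdlib Require Import ClassicalEpsilon.
Set Implicit Arguments. Unset Strict Implicit. Unset Printing Implicit Defensive.

(* The K4-bootstrap closure H is symmetric, irreflexive and closed under the
   rule "if u, v are adjacent to both ends of an edge ab, then uv is an edge".
   For an edge uv, applying the rule to a pair x, y of common neighbours (with
   ab := uv) shows that uv together with its common neighbours is a clique
   C(u, v), and applying it with ab := xy shows that C(x, y) = C(u, v) for any
   edge xy inside C(u, v).  The cliques C(u, v) are therefore determined by any
   of their edges, so they are edge-disjoint and cover H; and a triangle uvw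
   lies in C(u, w), which then contains the edge uv, so any cliques covering
   the three edges of a triangle coincide. *)

Definition K4_closed (T : eqType) (H : rel T) : Prop :=
  forall u v a b, u != v -> H a b -> H u a -> H u b -> H v a -> H v b -> H u v.

Section K4ClosedGraph.

Variables (T : finType) (H : rel T).
Hypotheses (Hsym : symmetric H) (Hirr : irreflexive H) (HK4 : K4_closed H).

Lemma rel_neq x y : H x y -> x != y.
Proof. by apply: contraTneq => ->; rewrite Hirr. Qed.

Definition is_clique (A : {set T}) : Prop :=
  {in A &, forall x y, x != y -> H x y}.

Definition edge_clique (u v : T) : {set T} :=
  [set w | (w == u) || (w == v) || H u w && H v w].

Lemma edge_cliqueP u v w :
  reflect [\/ w = u, w = v | H u w /\ H v w] (w \in edge_clique u v).
Proof.
rewrite inE; apply: (iffP idP) => [|[->|->|[-> ->]]]; rewrite ?eqxx ?orbT //.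
by case/orP=> [/orP[]/eqP|/andP[]]; [constructor 1 | constructor 2 | constructor 3].
Qed.

Lemma edge_clique_l u v : u \in edge_clique u v.
Proof. by rewrite inE eqxx. Qed.

Lemma edge_clique_r u v : v \in edge_clique u v.
Proof. by rewrite inE eqxx orbT. Qed.

Lemma edge_clique_is_clique u v : H u v -> is_clique (edge_clique u v).
Proof.
move=> Huv x y /edge_cliqueP[->|->|[Hux Hvx]] /edge_cliqueP[->|->|[Huy Hvy]];
  rewrite ?eqxx // => nxy; try by rewrite Hsym.
by apply: (HK4 nxy Huv); rewrite Hsym.
Qed.

Lemma adj_clique_of_adj2 A x y w z : is_clique A ->
  x \in A -> y \in A -> x != y -> H w x -> H w y ->
  z \in A -> w != z -> H w z.
Proof.
move=> cliqueA xA yA nxy Hwx Hwy zA nwz.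
have [->|nzx] := eqVneq z x; first by [].
have [->|nzy] := eqVneq z y; first by [].
by apply: (HK4 nwz (cliqueA x y xA yA nxy)); rewrite // cliqueA // eq_sym.
Qed.

Lemma edge_clique_eq u v x y : H u v ->
  x \in edge_clique u v -> y \in edge_clique u v -> x != y ->
  edge_clique x y = edge_clique u v.
Proof.
move=> Huv xC yC nxy; have cliqueC := edge_clique_is_clique Huv.
apply/setP => w; apply/idP/idP => [|wC].
- case/edge_cliqueP=> [->|->|[Hxw Hyw]] //.
  have [->|nwu] := eqVneq w u; first exact: edge_clique_l.
  have [->|nwv] := eqVneq w v; first exact: edge_clique_r.
  rewrite Hsym in Hxw; rewrite Hsym in Hyw.
  have adj_w := adj_clique_of_adj2 cliqueC xC yC nxy Hxw Hyw.
  apply/edge_cliqueP; constructor 3; rewrite !(Hsym _ w).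
  by split; apply: adj_w; rewrite ?edge_clique_l ?edge_clique_r.
- have [->|nwx] := eqVneq w x; first exact: edge_clique_l.
  have [->|nwy] := eqVneq w y; first exact: edge_clique_r.
  by apply/edge_cliqueP; constructor 3; split; apply: cliqueC; rewrite // eq_sym.
Qed.

Definition edge_cliques : {set {set T}} :=
  [set edge_clique x y | x in T, y in H x].

Lemma edge_cliquesP A :
  reflect (exists u v, H u v /\ A = edge_clique u v) (A \in edge_cliques).
Proof.
apply: (iffP imset2P) => [[u v _ Huv ->]|[u [v [Huv ->]]]]; first by exists u, v.
by exists u v.
Qed.

Lemma edge_cliques_clique A : A \in edge_cliques -> is_clique A.
Proof. by case/edge_cliquesP=> u [v [Huv ->]]; apply: edge_clique_is_clique. Qed.

Lemma edge_cliques_card A : A \in edge_cliques -> 1 < #|A|.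
Proof.
case/edge_cliquesP=> u [v [Huv ->]]; apply/card_gt1P.
by exists u, v; rewrite edge_clique_l edge_clique_r rel_neq.
Qed.

Lemma edge_cliques_eq A x y : A \in edge_cliques ->
  x \in A -> y \in A -> x != y -> A = edge_clique x y.
Proof. by case/edge_cliquesP=> u [v [Huv ->]] *; rewrite (edge_clique_eq Huv). Qed.

Lemma edge_cliques_meet A B x y : A \in edge_cliques -> B \in edge_cliques ->
  x \in A :&: B -> y \in A :&: B -> x != y -> A = B.
Proof.
move=> AK BK /setIP[xA xB] /setIP[yA yB] nxy.
by rewrite (edge_cliques_eq AK xA yA nxy) (edge_cliques_eq BK xB yB nxy).
Qed.

Lemma edge_cliques_triangle A B C u v w :
  A \in edge_cliques -> B \in edge_cliques -> C \in edge_cliques ->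
  u != v -> v != w -> u != w ->
  u \in A :&: B -> v \in B :&: C -> w \in A :&: C -> A = B.
Proof.
move=> AK BK CK nuv nvw nuw /setIP[uA uB] /setIP[vB vC] /setIP[wA wC].
have vA : v \in A.
  rewrite (edge_cliques_eq AK uA wA nuw); apply/edge_cliqueP; constructor 3.
  by rewrite (edge_cliques_clique BK) // Hsym (edge_cliques_clique CK).
by apply: (edge_cliques_meet AK BK _ _ nuv); apply/setIP.
Qed.

Lemma mem_edge_cliques u v : u != v ->
  H u v <-> exists2 A, A \in edge_cliques & (u \in A) && (v \in A).
Proof.
move=> nuv; split=> [Huv|[A AK /andP[uA vA]]].
  exists (edge_clique u v); last by rewrite edge_clique_l edge_clique_r.
  by apply/edge_cliquesP; exists u, v.
exact: edge_cliques_clique AK u v uA vA nuv.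
Qed.

End K4ClosedGraph.

Lemma K4_closed_clique_decomposition n (H : rel 'I_n) :
  symmetric H -> irreflexive H -> K4_closed H ->
  [/\ edge_disjoint_cliques (edge_cliques H),
      clique_triangle_free (edge_cliques H) &
      graph_of_cliques (fun u v => H u v) (edge_cliques H)].
Proof.
move=> Hsym Hirr HK4; split; last exact: mem_edge_cliques.
- split=> [A|A B AK BK]; first exact: edge_cliques_card.
  apply: contraNT; rewrite -ltnNge => /card_gt1P[x [y [xAB yAB nxy]]].
  by apply/eqP; apply: (edge_cliques_meet Hsym HK4 AK BK xAB yAB nxy).
- case=> u [v [w [A [B [C [[nuv nvw nuw] [AK BK CK] [nAB _ _] [uAB vBC wAC]]]]]]].
  by rewrite (edge_cliques_triangle Hsym HK4 AK BK CK nuv nvw nuw uAB vBC wAC) eqxx in nAB.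
Qed.

Section K4Closure.

Variables (n : nat) (G : rel 'I_n).

Lemma K4_closure_sym : symmetric G ->
  forall u v, K4_closure G u v -> K4_closure G v u.
Proof.
move=> Gsym u v [{}u {}v Guv|{}u {}v a b nuv *].
  by apply: K4c_base; rewrite Gsym.
by apply: (@K4c_step _ _ v u a b); rewrite // eq_sym.
Qed.

Lemma K4_closure_neq : irreflexive G ->
  forall u v, K4_closure G u v -> u != v.
Proof.
move=> Girr u v [{}u {}v Guv|//].
by apply: contraTneq Guv => ->; rewrite Girr.
Qed.

Definition K4_closureb : rel 'I_n :=
  fun u v => excluded_middle_informative (K4_closure G u v).

Lemma K4_closurebP u v : reflect (K4_closure G u v) (K4_closureb u v).
Proof. by rewrite /K4_closureb; case: excluded_middle_informative; constructor. Qed.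

Lemma K4_closureb_sym : symmetric G -> symmetric K4_closureb.
Proof. by move=> Gsym u v; apply/K4_closurebP/K4_closurebP; apply: K4_closure_sym. Qed.

Lemma K4_closureb_irr : irreflexive G -> irreflexive K4_closureb.
Proof. by move=> Girr u; apply/K4_closurebP => /(K4_closure_neq Girr); rewrite eqxx. Qed.

Lemma K4_closureb_K4_closed : irreflexive G -> K4_closed K4_closureb.
Proof.
move=> Girr u v a b nuv /K4_closurebP Hab /K4_closurebP Hua /K4_closurebP Hub
  /K4_closurebP Hva /K4_closurebP Hvb; apply/K4_closurebP.
by apply: (K4c_step (a := a) (b := b)); rewrite // (K4_closure_neq Girr).
Qed.

End K4Closure.

Theorem mainTheorem18 (n : nat) (G : rel 'I_n) :
  symmetric G -> irreflexive G ->
  exists K : {set {set 'I_n}},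
    [/\ edge_disjoint_cliques K,
        clique_triangle_free K &
        graph_of_cliques (K4_closure G) K].
Proof.
move=> Gsym Girr; exists (edge_cliques (K4_closureb G)).
have [disjK trfreeK graphK] := K4_closed_clique_decomposition
  (K4_closureb_sym Gsym) (K4_closureb_irr Girr) (K4_closureb_K4_closed Girr).
split=> // u v /graphK <-.
by split=> /K4_closurebP.
Qed.
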